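(* Let $\mu$ and $\lambda$ be constants, and let $r_\mu:=1/\sqrt{-\mu}$ if $\mu<0$ and $r_\mu:=+\infty$ if $\mu\ge 0$. Then the Randers metric $$F(x,y)=\frac{\sqrt[4]{1+(\mu+\lambda^2)|x|^2}\,\sqrt{(1+\mu|x|^2)|y|^2-\mu\langle x,y\rangle^2}}{1+\mu|x|^2}+\frac{\lambda\langle x,y\rangle}{(1+\mu|x|^2)\sqrt[4]{1+(\mu+\lambda^2)|x|^2}}$$ is dually flat on the ball $\mathbb{B}^n(r_\mu)=\{x\in\mathbb{R}^n:|x|<r_\mu\}$.
   Context: $|\cdot|$ and $\langle\cdot,\cdot\rangle$ are the Euclidean norm and inner product on $\mathbb{R}^n$; $x$ is the point and $y$ the tangent vector. A Finsler metric $F$ on an open set $U\subseteq\mathbb{R}^n$ is called dually flat if $[F^2]_{x^ky^l}y^k-2[F^2]_{x^l}=0$ on $U$. *)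

From HB Require Import structures.
From mathcomp Require Import all_boot all_order all_algebra.
From mathcomp Require Import all_classical all_reals all_analysis.
Set Implicit Arguments. Unset Strict Implicit. Unset Printing Implicit Defensive.
Import Order.TTheory GRing.Theory Num.Theory.
Import numFieldNormedType.Exports.
Local Open Scope ring_scope.
Local Open Scope classical_set_scope.

Section Defs.
Variables (R : realType) (n : nat).

Definition edot (x y : 'rV[R]_n) : R := \sum_(i < n) x 0 i * y 0 i.
Definition enorm2 (x : 'rV[R]_n) : R := edot x x.
Definition enorm (x : 'rV[R]_n) : R := Num.sqrt (enorm2 x).

Definition ebasis (k : 'I_n) : 'rV[R]_n := delta_mx 0 k.

Definition Fsq (F : 'rV[R]_n -> 'rV[R]_n -> R) (x y : 'rV[R]_n) : R := F x y ^+ 2.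
Definition Fsq_x F (k : 'I_n) (x y : 'rV[R]_n) : R :=
  'D_(ebasis k) (fun x' => Fsq F x' y) x.
Definition Fsq_xy F (k l : 'I_n) (x y : 'rV[R]_n) : R :=
  'D_(ebasis l) (fun y' => Fsq_x F k x y') y.

Definition dually_flat (U : set 'rV[R]_n) (F : 'rV[R]_n -> 'rV[R]_n -> R) : Prop :=
  forall x y, U x -> y != 0 ->
    (forall k, derivable (fun x' => Fsq F x' y) x (ebasis k)) /\
    (forall k l, derivable (fun y' => Fsq_x F k x y') y (ebasis l)) /\
    (forall l, \sum_(k < n) Fsq_xy F k l x y * y 0 k - 2 * Fsq_x F l x y = 0).

(* The ball B^n(r_mu), r_mu = 1/sqrt(-mu) if mu < 0, +oo otherwise *)
Definition ball_rmu (mu : R) : set 'rV[R]_n :=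
  [set x | mu < 0 -> enorm x < 1 / Num.sqrt (- mu)].

Definition randers_F (mu lam : R) (x y : 'rV[R]_n) : R :=
  let q := Num.sqrt (Num.sqrt (1 + (mu + lam ^+ 2) * enorm2 x)) in
  let d := 1 + mu * enorm2 x in
  q * Num.sqrt (d * enorm2 y - mu * edot x y ^+ 2) / d
  + lam * edot x y / (d * q).

End Defs.

(* Write s = |x|^2, t = <x,y>, u = |y|^2, d = 1 + mu s, w = 1 + (mu + lam^2) s and
   A = sqrt (d u - mu t^2).  Then F = alpha(s) A + beta(s) t with alpha = w^(1/4) / d
   and beta = lam / (d w^(1/4)), so [F^2]_{x^k} = 2 F (2 phi_s x^k + phi_t y^k) where
   phi_s, phi_t are the partial derivatives of F in s and t.  This is linear in the
   direction e_k, so the contraction with y^k in the flatness condition just replaces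
   e_k by y, and the condition becomes one rational identity in alpha, beta, their
   derivatives, A, t, u, x^l and y^l.  That identity holds as soon as
   4 alpha alpha' d + 3 mu alpha^2 = beta^2 and (alpha beta d^2)' = 0 (indeed
   alpha beta d^2 = lam), which the closed forms of alpha and beta satisfy.  On the
   ball d > 0, w > 0 and d u - mu t^2 > 0 for y <> 0 (Cauchy-Schwarz), so every
   square root is differentiated where it is smooth. *)

From HB Require Import structures.
From mathcomp Require Import all_boot all_order all_algebra.
From mathcomp Require Import all_classical all_reals all_analysis.
From mathcomp Require Import ring lra.
Import Order.TTheory GRing.Theory Num.Theory.
Import numFieldNormedType.Exports.
Local Open Scope ring_scope.

Set Implicit Arguments. Unset Strict Implicit.

Section DirectionalDerivative.
Context {R : realType} {V : normedModType R}.
Implicit Types (f g : V -> R) (x v : V).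

Lemma derive_along_line f x v :
  'D_v f x = 'D_(1:R) (fun h : R => f (h *: v + x)) (0:R).
Proof.
rewrite /derive; congr (lim _).
set g1 := fun h => h^-1 *: _; set g2 := fun h => h^-1 *: _.
suff -> : g1 = g2 by [].
by rewrite funeqE /g1 /g2 => h /=; rewrite addr0 scale0r add0r [_%:A]mulr1.
Qed.

Lemma is_derive_along_line f x v df :
  is_derive x v f df <-> is_derive (0:R) (1:R) (fun h : R => f (h *: v + x)) df.
Proof.
split=> -[fxv dfE].
  by apply: DeriveDef; [exact: (proj1 (derivable1P f x v)) | rewrite -derive_along_line].
by apply: DeriveDef; [exact: (proj2 (derivable1P f x v)) | rewrite derive_along_line].
Qed.

(* Pointwise forms of the library rules: stated on [fun z => ...] and with [*]
   instead of [*:], so that [is_derive_eq] side goals close by [ring]/[field]. *)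

Lemma is_derive_cst_pw (a : R) x v : is_derive x v (fun _ : V => a) 0.
Proof. exact: is_derive_cst. Qed.

Lemma is_deriveD_pw f g x v df dg : is_derive x v f df -> is_derive x v g dg ->
  is_derive x v (fun z => f z + g z) (df + dg).
Proof. exact: is_deriveD. Qed.

Lemma is_deriveN_pw f x v df : is_derive x v f df -> is_derive x v (fun z => - f z) (- df).
Proof. exact: is_deriveN. Qed.

Lemma is_deriveM_pw f g x v df dg : is_derive x v f df -> is_derive x v g dg ->
  is_derive x v (fun z => f z * g z) (f x * dg + g x * df).
Proof. exact: is_deriveM. Qed.

Lemma is_derive_comp_pw f (g : R -> R) x v df dg :
  is_derive x v f df -> is_derive (f x) 1 g dg ->
  is_derive x v (fun z => g (f z)) (dg * df).
Proof.
move=> /is_derive_along_line fdf gdg; apply/is_derive_along_line.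
apply: (@is_derive1_comp R g (fun h : R => f (h *: v + x))) => //.
by rewrite /= scale0r add0r.
Qed.

Lemma is_derive_sqrt_pw f x v df : is_derive x v f df -> 0 < f x ->
  is_derive x v (fun z => Num.sqrt (f z)) (df / (2 * Num.sqrt (f x))).
Proof.
by move=> fdf fx_gt0; rewrite mulrC; apply: is_derive_comp_pw fdf _; exact: is_derive1_sqrt.
Qed.

Lemma is_deriveV_pw f x v df : is_derive x v f df -> f x != 0 ->
  is_derive x v (fun z => (f z)^-1) (- df / f x ^+ 2).
Proof.
move=> [fxv dfE] fx_neq0; apply: DeriveDef; first exact: derivableV.
by rewrite deriveV // dfE [LHS]mulNr mulrC mulNr.
Qed.

End DirectionalDerivative.

Section Euclidean.
Context {R : realType} {n : nat}.
Implicit Types (x y z v : 'rV[R]_n).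

Lemma edotC x y : edot x y = edot y x.
Proof. by apply: eq_bigr => i _; rewrite mulrC. Qed.

Lemma edotDl x z y : edot (x + z) y = edot x y + edot z y.
Proof. by rewrite /edot -big_split; apply: eq_bigr => i _; rewrite !mxE mulrDl. Qed.

Lemma edotZl (a : R) x y : edot (a *: x) y = a * edot x y.
Proof. by rewrite /edot mulr_sumr; apply: eq_bigr => i _; rewrite !mxE mulrA. Qed.

Lemma edotDr x y z : edot x (y + z) = edot x y + edot x z.
Proof. by rewrite edotC edotDl !(edotC _ x). Qed.

Lemma edotZr (a : R) x y : edot x (a *: y) = a * edot x y.
Proof. by rewrite edotC edotZl edotC. Qed.

Lemma edot0r x : edot x 0 = 0.
Proof. by rewrite /edot big1 // => i _; rewrite mxE mulr0. Qed.

Lemma edot_ebasisr x k : edot x (@ebasis R n k) = x 0 k.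
Proof.
rewrite /edot (bigD1 k) //= big1 => [|i ik]; rewrite /ebasis !mxE ?eqxx /=.
  by rewrite mulr1 addr0.
by rewrite (negbTE ik) mulr0.
Qed.

Lemma edot_ebasisl x k : edot (@ebasis R n k) x = x 0 k.
Proof. by rewrite edotC edot_ebasisr. Qed.

Lemma sum_edot_ebasisr x y : \sum_(k < n) edot x (@ebasis R n k) * y 0 k = edot x y.
Proof. by apply: eq_bigr => k _; rewrite edot_ebasisr. Qed.

Lemma sum_edot_ebasisl x y : \sum_(k < n) edot (@ebasis R n k) x * y 0 k = edot y x.
Proof. by rewrite edotC -sum_edot_ebasisr; apply: eq_bigr => k _; rewrite edotC. Qed.

Lemma enorm2_ge0 x : 0 <= enorm2 x.
Proof. by apply: sumr_ge0 => i _; rewrite -expr2 sqr_ge0. Qed.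

Lemma enorm2_gt0 x : x != 0 -> 0 < enorm2 x.
Proof.
move=> x_neq0; rewrite lt_def enorm2_ge0 andbT; apply: contra x_neq0 => /eqP x0.
apply/eqP/matrixP => i j; rewrite ord1 mxE.
have /eqP : x 0 j * x 0 j = 0.
  by apply: (psumr_eq0P _ x0) => // k _; rewrite -expr2 sqr_ge0.
by rewrite mulf_eq0 orbb => /eqP.
Qed.

Lemma edot_sqr_le x y : edot x y ^+ 2 <= enorm2 x * enorm2 y.
Proof.
have [->|y_neq0] := eqVneq y 0.
  by rewrite /enorm2 !edot0r mulr0 expr0n.
have u_gt0 := enorm2_gt0 y_neq0.
have := enorm2_ge0 (enorm2 y *: x - edot x y *: y).
rewrite /enorm2 -!scaleNr !edotDl !edotDr !edotZl !edotZr (edotC y x) => h.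
have : 0 <= edot y y * (edot x x * edot y y - edot x y ^+ 2).
  by move: h; congr (_ <= _); ring.
by rewrite pmulr_rge0 // subr_ge0.
Qed.

Lemma is_derive_quadratic_at0 (a b c : R) :
  is_derive (0:R) (1:R) (fun h : R => a * (h * h) + b * h + c) b.
Proof.
by apply: is_derive_eq; rewrite !scale0r !addr0 scaler0 add0r; exact: mulr1.
Qed.

Lemma is_derive_edotl x y v : is_derive x v (fun z => edot z y) (edot v y).
Proof.
apply/is_derive_along_line.
have -> : (fun h : R => edot (h *: v + x) y) = (fun h => 0 * (h * h) + edot v y * h + edot x y).
  by apply/funext => h; rewrite edotDl edotZl mul0r add0r mulrC.
exact: is_derive_quadratic_at0.
Qed.

Lemma is_derive_edotr x y v : is_derive y v (fun z => edot x z) (edot x v).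
Proof.
under eq_fun do rewrite edotC.
by rewrite edotC; exact: is_derive_edotl.
Qed.

Lemma is_derive_enorm2 x v : is_derive x v (fun z => enorm2 z) (2 * edot x v).
Proof.
apply/is_derive_along_line.
have -> : (fun h : R => enorm2 (h *: v + x)) =
    (fun h => edot v v * (h * h) + 2 * edot x v * h + edot x x).
  apply/funext => h.
  by rewrite /enorm2 edotDl !edotDr !edotZl !edotZr (edotC v x); ring.
exact: is_derive_quadratic_at0.
Qed.

End Euclidean.

(* [a], [b] stand for alpha(s), beta(s), [A] for sqrt (d u - mu t^2) and [p], [q] for
   <x,v>, <y,v>; [Ps], [Pt] are the partial derivatives of F in s and t, and the
   [d]-prefixed terms are derivatives in y along v. *)
Lemma randers_flat_identity (R : realFieldType) (a a' b b' d mu A t u p q : R) :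
  A != 0 -> a != 0 -> d != 0 ->
  A ^+ 2 = d * u - mu * t ^+ 2 ->
  4 * a * a' * d + 3 * a ^+ 2 * mu - b ^+ 2 = 0 ->
  a' * b * d + a * b' * d + 2 * a * b * mu = 0 ->
  let F := a * A + b * t in
  let Ps := a' * A + a * mu * u / (2 * A) + b' * t in
  let Pt := - (a * mu * t / A) + b in
  let dA := (d * (2 * q) - mu * (2 * t * p)) / (2 * A) in
  let dF := a * dA + b * p in
  let dPs := a' * dA + a * mu * (2 * q) / (2 * A) - a * mu * u * dA / (2 * A ^+ 2) + b' * p in
  let dPt := - (a * mu * p / A) + a * mu * t * dA / A ^+ 2 in
  2 * dF * (Ps * (2 * t) + Pt * u) + 2 * F * (dPs * (2 * t) + dPt * u + Pt * q)
    = 2 * (2 * F * (Ps * (2 * p) + Pt * q)).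
Proof.
move=> A_neq0 a_neq0 d_neq0 AE alpha_eq beta_eq F Ps Pt dA dF dPs dPt.
have uE : u = (A ^+ 2 + mu * t ^+ 2) / d by rewrite AE; field.
have a'E : a' = (b ^+ 2 - 3 * a ^+ 2 * mu) / (4 * a * d).
  apply: (mulIf (_ : 4 * a * d != 0)); first by rewrite !mulf_neq0.
  by rewrite divfK ?mulf_neq0 //; apply/eqP; rewrite -subr_eq0 -alpha_eq; apply/eqP; ring.
have b'E : b' = - (a' * b * d + 2 * a * b * mu) / (a * d).
  apply: (mulIf (_ : a * d != 0)); first by rewrite mulf_neq0.
  by rewrite divfK ?mulf_neq0 //; apply/eqP; rewrite -subr_eq0 -beta_eq; apply/eqP; ring.
rewrite /dPs /dPt /dF /dA /Ps /Pt /F b'E a'E uE.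
by field; rewrite A_neq0 d_neq0 a_neq0.
Qed.

Section RandersCoefficients.
Context {R : realType} (mu lam : R).
Implicit Types (s : R).

Definition dmu s := 1 + mu * s.
Definition wlam s := 1 + (mu + lam ^+ 2) * s.
Definition qroot s := Num.sqrt (Num.sqrt (wlam s)).
Definition alpha s := qroot s / dmu s.
Definition beta s := lam / (dmu s * qroot s).

Definition qroot' s := (mu + lam ^+ 2) / (2 * Num.sqrt (wlam s)) / (2 * qroot s).
Definition alpha' s := qroot' s / dmu s - qroot s * mu / dmu s ^+ 2.
Definition beta' s := - (lam * (mu * qroot s + dmu s * qroot' s)) / (dmu s * qroot s) ^+ 2.

Lemma is_derive_affine (a b s : R) : is_derive s (1:R) (fun r : R => a + b * r) b.
Proof.
apply: (is_derive_eq (is_deriveD_pw (is_derive_cst_pw a s 1)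
  (is_deriveM_pw (is_derive_cst_pw b s 1) (is_derive_id s 1)))).
by rewrite mulr1 mulr0 addr0 add0r.
Qed.

Lemma qroot_gt0 s : 0 < wlam s -> 0 < qroot s.
Proof. by move=> w_gt0; rewrite !sqrtr_gt0. Qed.

Lemma sqrt_wlam s : 0 < wlam s -> Num.sqrt (wlam s) = qroot s ^+ 2.
Proof. by move=> w_gt0; rewrite sqr_sqrtr // sqrtr_ge0. Qed.

Lemma qroot_exp4 s : 0 < wlam s -> qroot s ^+ 4 = wlam s.
Proof. by move=> w_gt0; rewrite (exprM _ 2 2) -sqrt_wlam // sqr_sqrtr // ltW. Qed.

Lemma is_derive_qroot s : 0 < wlam s -> is_derive s (1:R) qroot (qroot' s).
Proof.
move=> w_gt0; have sqrt_w_gt0 : 0 < Num.sqrt (wlam s) by rewrite sqrtr_gt0.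
exact: (is_derive_sqrt_pw (is_derive_sqrt_pw (is_derive_affine 1 _ s) w_gt0) sqrt_w_gt0).
Qed.

Lemma is_derive_alpha s : 0 < wlam s -> dmu s != 0 -> is_derive s (1:R) alpha (alpha' s).
Proof.
move=> w_gt0 d_neq0.
apply: (is_derive_eq (is_deriveM_pw (is_derive_qroot w_gt0)
  (is_deriveV_pw (is_derive_affine 1 mu s) d_neq0))).
by rewrite /alpha' /dmu; field; exact: d_neq0.
Qed.

Lemma is_derive_beta s : 0 < wlam s -> dmu s != 0 -> is_derive s (1:R) beta (beta' s).
Proof.
move=> w_gt0 d_neq0.
have dq_neq0 : dmu s * qroot s != 0 by rewrite mulf_neq0 // gt_eqF // qroot_gt0.
apply: (is_derive_eq (is_deriveM_pw (is_derive_cst_pw lam s 1)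
  (is_deriveV_pw (is_deriveM_pw (is_derive_affine 1 mu s) (is_derive_qroot w_gt0)) dq_neq0))).
by rewrite /beta' /dmu; field; rewrite -/(dmu s) d_neq0 gt_eqF // qroot_gt0.
Qed.

Lemma alpha_beta_ode1 s : 0 < wlam s -> dmu s != 0 ->
  4 * alpha s * alpha' s * dmu s + 3 * alpha s ^+ 2 * mu - beta s ^+ 2 = 0.
Proof.
move=> w_gt0 d_neq0; have q_neq0 : qroot s != 0 by rewrite gt_eqF // qroot_gt0.
rewrite /alpha /alpha' /beta /qroot' (sqrt_wlam w_gt0).
apply: (@eq_trans _ _ (((mu + lam ^+ 2) * dmu s - qroot s ^+ 4 * mu - lam ^+ 2)
  / (dmu s ^+ 2 * qroot s ^+ 2))); first by field; rewrite d_neq0 q_neq0.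
by rewrite qroot_exp4 // /wlam /dmu (_ : _ - _ - _ = 0) ?mul0r //; ring.
Qed.

Lemma alpha_beta_ode2 s : 0 < wlam s -> dmu s != 0 ->
  alpha' s * beta s * dmu s + alpha s * beta' s * dmu s + 2 * alpha s * beta s * mu = 0.
Proof.
move=> w_gt0 d_neq0; have q_neq0 : qroot s != 0 by rewrite gt_eqF // qroot_gt0.
by rewrite /alpha /alpha' /beta /beta'; field; rewrite d_neq0 q_neq0.
Qed.

End RandersCoefficients.

Section RandersMetric.
Context {R : realType} {n : nat} (mu lam : R).
Implicit Types (x y v w : 'rV[R]_n).

Local Notation a x := (alpha mu lam (enorm2 x)).
Local Notation a' x := (alpha' mu lam (enorm2 x)).
Local Notation b x := (beta mu lam (enorm2 x)).
Local Notation b' x := (beta' mu lam (enorm2 x)).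
Local Notation d x := (dmu mu (enorm2 x)).

Definition riemA x y := Num.sqrt (d x * enorm2 y - mu * edot x y ^+ 2).

Lemma randers_FE x y : randers_F mu lam x y = a x * riemA x y + b x * edot x y.
Proof. by rewrite /randers_F /alpha /beta /riemA /qroot /wlam /dmu; ring. Qed.

Lemma ball_rmu_dmu_gt0 x : ball_rmu mu x -> 0 < d x.
Proof.
rewrite /ball_rmu /= /dmu => x_in; have s_ge0 := enorm2_ge0 x.
have [mu_lt0|mu_ge0] := ltP mu 0; last first.
  by apply: (@lt_le_trans _ _ 1) => //; rewrite lerDl mulr_ge0.
have sqrt_gt0 : 0 < Num.sqrt (- mu) by rewrite sqrtr_gt0 oppr_gt0.
move: (x_in mu_lt0); rewrite /enorm ltr_pdivlMr // -sqrtrM // -sqrtr1 ltr_sqrt //.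
by rewrite mulrN mulrC sqrtr1 => ?; lra.
Qed.

Lemma ball_rmu_wlam_gt0 x : ball_rmu mu x -> 0 < wlam mu lam (enorm2 x).
Proof.
move=> /ball_rmu_dmu_gt0; rewrite /wlam /dmu => d_gt0.
have : 0 <= lam ^+ 2 * enorm2 x by rewrite mulr_ge0 ?sqr_ge0 ?enorm2_ge0.
by lra.
Qed.

Lemma ball_rmu_radicand_gt0 x y : ball_rmu mu x -> y != 0 ->
  0 < d x * enorm2 y - mu * edot x y ^+ 2.
Proof.
move=> /ball_rmu_dmu_gt0 d_gt0 /enorm2_gt0 u_gt0.
have cs := edot_sqr_le x y; have t2_ge0 := sqr_ge0 (edot x y).
have [mu_lt0|mu_ge0] := ltP mu 0.
  have : 0 < d x * enorm2 y by rewrite mulr_gt0.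
  have : 0 <= - mu * edot x y ^+ 2 by rewrite mulr_ge0 // oppr_ge0 ltW.
  by lra.
have : 0 <= mu * (enorm2 x * enorm2 y - edot x y ^+ 2) by rewrite mulr_ge0 // subr_ge0.
by rewrite /dmu; lra.
Qed.

Lemma riemA_gt0 x y : ball_rmu mu x -> y != 0 -> 0 < riemA x y.
Proof. by move=> x_in y_neq0; rewrite sqrtr_gt0 ball_rmu_radicand_gt0. Qed.

(* Partial derivatives of F in s = |x|^2 and t = <x,y>, with y fixed. *)
Definition phi_s x y :=
  a' x * riemA x y + a x * mu * enorm2 y / (2 * riemA x y) + b' x * edot x y.
Definition phi_t x y := - (a x * mu * edot x y / riemA x y) + b x.

Lemma is_derive_randers_x x y v : ball_rmu mu x -> y != 0 ->
  is_derive x v (fun z => randers_F mu lam z y)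
    (phi_s x y * (2 * edot x v) + phi_t x y * edot v y).
Proof.
move=> x_in y_neq0.
have w_gt0 := ball_rmu_wlam_gt0 x_in; have d_neq0 := lt0r_neq0 (ball_rmu_dmu_gt0 x_in).
have A_neq0 := lt0r_neq0 (riemA_gt0 x_in y_neq0).
have ds := is_derive_enorm2 x v; have dt := is_derive_edotl x y v.
have dradicand : is_derive x v (fun z => d z * enorm2 y - mu * edot z y ^+ 2)
    (mu * (2 * edot x v) * enorm2 y - mu * (2 * edot x y * edot v y)).
  apply: (is_derive_eq (is_deriveB
    (is_deriveM_pw (is_derive_comp_pw ds (is_derive_affine 1 mu _)) (is_derive_cst_pw _ _ _))
    (is_deriveM_pw (is_derive_cst_pw mu _ _) (is_deriveM_pw dt dt)))).
  by rewrite /=; ring.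
under eq_fun do rewrite randers_FE.
apply: (is_derive_eq (is_deriveD
  (is_deriveM_pw (is_derive_comp_pw ds (is_derive_alpha w_gt0 d_neq0))
    (is_derive_sqrt_pw dradicand (ball_rmu_radicand_gt0 x_in y_neq0)))
  (is_deriveM_pw (is_derive_comp_pw ds (is_derive_beta w_gt0 d_neq0)) dt))).
by rewrite /= -/(riemA x y) /phi_s /phi_t; field.
Qed.

Definition randers_sq_dx w x y :=
  2 * (a x * riemA x y + b x * edot x y) * (phi_s x y * (2 * edot x w) + phi_t x y * edot w y).

Lemma is_derive_randers_sq_x x y w : ball_rmu mu x -> y != 0 ->
  is_derive x w (fun z => Fsq (randers_F mu lam) z y) (randers_sq_dx w x y).
Proof.
move=> x_in y_neq0; have dF := is_derive_randers_x w x_in y_neq0.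
by apply: (is_derive_eq (is_deriveM_pw dF dF)); rewrite /randers_sq_dx -randers_FE; ring.
Qed.

Lemma Fsq_x_randers k x : ball_rmu mu x ->
  Fsq_x (randers_F mu lam) k x = randers_sq_dx (@ebasis R n k) x.
Proof.
move=> x_in; apply/funext => y; have [->|y_neq0] := eqVneq y 0; last first.
  by rewrite /Fsq_x; have [_ ->] := is_derive_randers_sq_x (@ebasis R n k) x_in y_neq0.
have A0 z : riemA z 0 = 0.
  by rewrite /riemA /enorm2 !edot0r expr0n /= !mulr0 subr0 sqrtr0.
rewrite /randers_sq_dx A0 edot0r !mulr0 addr0 mulr0 mul0r.
rewrite /Fsq_x (_ : (fun z => Fsq (randers_F mu lam) z 0) = cst 0) ?derive_cst //.
by apply/funext => z; rewrite /Fsq randers_FE A0 edot0r !mulr0 addr0 expr0n.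
Qed.

Definition riemA_dy x y v :=
  (d x * (2 * edot y v) - mu * (2 * edot x y * edot x v)) / (2 * riemA x y).
Definition randers_dy x y v := a x * riemA_dy x y v + b x * edot x v.
Definition phi_s_dy x y v := a' x * riemA_dy x y v
  + a x * mu * (2 * edot y v) / (2 * riemA x y)
  - a x * mu * enorm2 y * riemA_dy x y v / (2 * riemA x y ^+ 2) + b' x * edot x v.
Definition phi_t_dy x y v := - (a x * mu * edot x v / riemA x y)
  + a x * mu * edot x y * riemA_dy x y v / riemA x y ^+ 2.

Definition randers_sq_dxdy w x y v :=
  2 * randers_dy x y v * (phi_s x y * (2 * edot x w) + phi_t x y * edot w y)
  + 2 * (a x * riemA x y + b x * edot x y)
      * (phi_s_dy x y v * (2 * edot x w) + phi_t_dy x y v * edot w y + phi_t x y * edot w v).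

Lemma is_derive_randers_sq_dx_y w x y v : ball_rmu mu x -> y != 0 ->
  is_derive y v (randers_sq_dx w x) (randers_sq_dxdy w x y v).
Proof.
move=> x_in y_neq0; have A_neq0 := lt0r_neq0 (riemA_gt0 x_in y_neq0).
have A2_neq0 : 2 * riemA x y != 0 by rewrite mulf_neq0 // pnatr_eq0.
have du := is_derive_enorm2 y v; have dt := is_derive_edotr x y v.
have dradicand : is_derive y v (fun z => d x * enorm2 z - mu * edot x z ^+ 2)
    (d x * (2 * edot y v) - mu * (2 * edot x y * edot x v)).
  apply: (is_derive_eq (is_deriveB (is_deriveM_pw (is_derive_cst_pw _ _ _) du)
    (is_deriveM_pw (is_derive_cst_pw mu _ _) (is_deriveM_pw dt dt)))).
  by rewrite /=; ring.
have dA := is_derive_sqrt_pw dradicand (ball_rmu_radicand_gt0 x_in y_neq0).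
have dF := is_deriveD_pw (is_deriveM_pw (is_derive_cst_pw (a x) _ _) dA)
  (is_deriveM_pw (is_derive_cst_pw (b x) _ _) dt).
have dphi_s := is_deriveD_pw (is_deriveD_pw (is_deriveM_pw (is_derive_cst_pw (a' x) _ _) dA)
  (is_deriveM_pw (is_deriveM_pw (is_derive_cst_pw (a x * mu) _ _) du)
    (is_deriveV_pw (is_deriveM_pw (is_derive_cst_pw 2 _ _) dA) A2_neq0)))
  (is_deriveM_pw (is_derive_cst_pw (b' x) _ _) dt).
have dphi_t := is_deriveD_pw (is_deriveN_pw (is_deriveM_pw
    (is_deriveM_pw (is_derive_cst_pw (a x * mu) _ _) dt) (is_deriveV_pw dA A_neq0)))
  (is_derive_cst_pw (b x) _ _).
rewrite /randers_sq_dx /phi_s /phi_t.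
apply: (is_derive_eq (is_deriveM_pw (is_deriveM_pw (is_derive_cst_pw 2 _ _) dF)
  (is_deriveD_pw (is_deriveM_pw dphi_s (is_derive_cst_pw (2 * edot x w) _ _))
    (is_deriveM_pw dphi_t (is_derive_edotr w y v))))).
rewrite /randers_sq_dxdy /randers_dy /phi_s_dy /phi_t_dy /riemA_dy /phi_s /phi_t /=.
by rewrite -/(riemA x y); field.
Qed.

Lemma sum_randers_sq_dxdy x y v :
  \sum_(k < n) randers_sq_dxdy (@ebasis R n k) x y v * y 0 k = randers_sq_dxdy y x y v.
Proof.
set F := a x * riemA x y + b x * edot x y.
set P := 2 * randers_dy x y v * phi_s x y * 2 + 2 * F * phi_s_dy x y v * 2.
set Q := 2 * randers_dy x y v * phi_t x y + 2 * F * phi_t_dy x y v.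
set S := 2 * F * phi_t x y.
have sq_dxdyE w : randers_sq_dxdy w x y v = P * edot x w + Q * edot w y + S * edot w v.
  by rewrite /randers_sq_dxdy /P /Q /S /F; ring.
rewrite (eq_bigr (fun k => P * (edot x (@ebasis R n k) * y 0 k)
  + Q * (edot (@ebasis R n k) y * y 0 k) + S * (edot (@ebasis R n k) v * y 0 k))); last first.
  by move=> k _; rewrite sq_dxdyE; ring.
by rewrite !big_split /= -!mulr_sumr sum_edot_ebasisr !sum_edot_ebasisl sq_dxdyE.
Qed.

Lemma randers_sq_dxdy_flat x y v : ball_rmu mu x -> y != 0 ->
  randers_sq_dxdy y x y v = 2 * randers_sq_dx v x y.
Proof.
move=> x_in y_neq0; have radicand_gt0 := ball_rmu_radicand_gt0 x_in y_neq0.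
have w_gt0 := ball_rmu_wlam_gt0 x_in; have d_neq0 := lt0r_neq0 (ball_rmu_dmu_gt0 x_in).
have a_neq0 : a x != 0 by rewrite mulf_neq0 ?invr_eq0 // gt_eqF // qroot_gt0.
have AE : riemA x y ^+ 2 = d x * enorm2 y - mu * edot x y ^+ 2 by rewrite sqr_sqrtr // ltW.
rewrite /randers_sq_dxdy /randers_sq_dx (edotC v y).
exact: (randers_flat_identity (edot x v) (edot y v)
  (lt0r_neq0 (riemA_gt0 x_in y_neq0)) a_neq0 d_neq0 AE
  (alpha_beta_ode1 w_gt0 d_neq0) (alpha_beta_ode2 w_gt0 d_neq0)).
Qed.

End RandersMetric.

Theorem theorem1p3 (R : realType) (n : nat) (mu lam : R) :
  @dually_flat R n (@ball_rmu R n mu) (@randers_F R n mu lam).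
Proof.
move=> x y x_in y_neq0.
have Fsq_xyE k l : Fsq_xy (randers_F mu lam) k l x y =
    randers_sq_dxdy mu lam (@ebasis R n k) x y (@ebasis R n l).
  rewrite /Fsq_xy Fsq_x_randers //.
  by have [_ ->] := is_derive_randers_sq_dx_y lam (@ebasis R n k) (@ebasis R n l) x_in y_neq0.
split; [|split].
- by move=> k; have [] := is_derive_randers_sq_x lam (@ebasis R n k) x_in y_neq0.
- move=> k l; rewrite Fsq_x_randers //.
  by have [] := is_derive_randers_sq_dx_y lam (@ebasis R n k) (@ebasis R n l) x_in y_neq0.
move=> l; under eq_bigr do rewrite Fsq_xyE.
rewrite sum_randers_sq_dxdy randers_sq_dxdy_flat // Fsq_x_randers //.
by rewrite subrr.
Qed.
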